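(* Let $H=\langle a,b,c\mid ac=ca,\ bc=cb,\ [a,b]=c\rangle$ be the integral Heisenberg group, identified with the group of matrices $\begin{bmatrix}1&x&z\\ &1&y\\ &&1\end{bmatrix}$ with $x,y,z\in\mathbb{Z}$, and let $S=\{a,b,a^{-1},b^{-1}\}$ be the generating set. For any $g=\begin{bmatrix}1&x&z\\ &1&y\\ &&1\end{bmatrix}\in H$, the stable word length with respect to $S$ is \[ \mathrm{swl}_S(g)=\lim_{n\to\infty}\frac{|g^n|_S}{n}=|x|+|y|. \]
   Context: Here $|g|_S$ denotes the word length of $g$ with respect to $S$. The proof uses Blachère's formula for word lengths in the Heisenberg group: writing $d(x,y,z)$ for the word length of the matrix with entries $x,y,z$, one has $d(x,y,z)=d(-x,y,-z)=d(x,-y,-z)=d(-x,-y,z)=d(y,x,z)$, and for $z\ge 0$, $x\ge 0$, $x\ge y\ge -x$: if $y\ge 0$, $x\le\sqrt z$ then $d(x,y,z)=2\lceil 2\sqrt z\rceil-x-y$; if $y\ge 0$, $x\ge\sqrt z$ and $xy>z$ then $d(x,y,z)=x+y$. *)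

From HB Require Import structures.
From mathcomp Require Import all_boot all_order all_algebra zify ring.
From mathcomp Require Import all_classical all_reals all_analysis.
Set Implicit Arguments. Unset Strict Implicit. Unset Printing Implicit Defensive.
Import Order.TTheory GRing.Theory Num.Theory.
Local Open Scope ring_scope.

(** The integral Heisenberg group, identified with the upper unitriangular
    integer matrices [[1,x,z],[0,1,y],[0,0,1]], encoded as the triple (x,y,z).
    Matrix multiplication gives
    (x,y,z)(x',y',z') = (x+x', y+y', z+z'+x*y'). *)
Definition heis := (int * int * int)%type.
Definition hx (g : heis) : int := g.1.1.
Definition hy (g : heis) : int := g.1.2.
Definition hz (g : heis) : int := g.2.
Definition hmul (g h : heis) : heis :=
  (hx g + hx h, hy g + hy h, hz g + hz h + hx g * hy h).
Definition hone : heis := (0, 0, 0).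
Definition hpow (g : heis) (n : nat) : heis := iter n (hmul g) hone.

(** The generating set S = {a, a^-1, b, b^-1}, indexed by 'I_4:
    0 |-> a, 1 |-> a^-1, 2 |-> b, 3 |-> b^-1, where
    a = (1,0,0) (x = 1) and b = (0,1,0) (y = 1). *)
Definition gen (i : 'I_4) : heis :=
  match val i with
  | 0 => (1, 0, 0)
  | 1 => (-1, 0, 0)
  | 2 => (0, 1, 0)
  | _ => (0, -1, 0)
  end.

Definition eval_word (w : seq 'I_4) : heis :=
  foldl (fun g i => hmul g (gen i)) hone w.

Definition has_word_of_length (g : heis) (n : nat) : bool :=
  [exists t : n.-tuple 'I_4, eval_word t == g].

Definition reach (g : heis) := exists w, eval_word w = g.

Lemma reach_step g i : reach g -> reach (hmul g (gen i)).
Proof. by case=> w <-; exists (rcons w i); rewrite /eval_word foldl_rcons. Qed.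

Lemma reach_eq g h : g = h -> reach g -> reach h.
Proof. by move=> ->. Qed.

Lemma int_ind2 (P : int -> Prop) : P 0 -> (forall z, P z -> P (z + 1)) ->
  (forall z, P z -> P (z - 1)) -> forall z, P z.
Proof.
move=> P0 Pp Pm; case=> n; elim: n => [|n IH] //.
- have -> : Posz n.+1 = Posz n + 1 by lia.
  exact: Pp.
- have -> : Negz 0 = 0 - 1 by [].
  exact: Pm.
- have -> : Negz n.+1 = Negz n - 1 by rewrite !NegzE; lia.
  exact: Pm.
Qed.

Definition o0 : 'I_4 := @Ordinal 4 0 isT.
Definition o1 : 'I_4 := @Ordinal 4 1 isT.
Definition o2 : 'I_4 := @Ordinal 4 2 isT.
Definition o3 : 'I_4 := @Ordinal 4 3 isT.

Lemma all_reach g : reach g.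
Proof.
have zP : forall x y z, reach (x, y, z) -> reach (x, y, z + 1) /\ reach (x, y, z - 1).
  move=> x y z H; split.
  - move: (reach_step o0 H) => /(reach_step o2) /(reach_step o1) /(reach_step o3).
    by apply: reach_eq; rewrite /hmul /gen /hx /hy /hz /=; congr (_, _, _); ring.
  - move: (reach_step o2 H) => /(reach_step o0) /(reach_step o3) /(reach_step o1).
    by apply: reach_eq; rewrite /hmul /gen /hx /hy /hz /=; congr (_, _, _); ring.
have h0 : forall z, reach (0, 0, z).
  apply: int_ind2; first by exists [::].
  - by move=> z /zP [].
  - by move=> z /zP [].
have h1 : forall x z, reach (x, 0, z).
  move=> x z; elim/int_ind2: x => [|x H|x H]; first exact: h0.
  - move: (reach_step o0 H); apply: reach_eq.
    by rewrite /hmul /gen /hx /hy /hz /=; congr (_, _, _); ring.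
  - move: (reach_step o1 H); apply: reach_eq.
    by rewrite /hmul /gen /hx /hy /hz /=; congr (_, _, _); ring.
case: g => [[x y] z].
elim/int_ind2: y z => [|y IH|y IH] z; first exact: h1.
- move: (reach_step o2 (IH (z - x))); apply: reach_eq.
  by rewrite /hmul /gen /hx /hy /hz /=; congr (_, _, _); ring.
- move: (reach_step o3 (IH (z + x))); apply: reach_eq.
  by rewrite /hmul /gen /hx /hy /hz /=; congr (_, _, _); ring.
Qed.

Lemma generated (g : heis) : exists n, has_word_of_length g n.
Proof.
case: (all_reach g) => w Hw; exists (size w).
by apply/existsP; exists (in_tuple w); rewrite Hw.
Qed.

Definition word_length (g : heis) : nat := ex_minn (generated g).

(* Each generator changes |x| + |y| by at most one, so |g^n|_S >= n (|x| + |y|).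
   Conversely g^n = h^n c with h = a^x b^y of length |x| + |y| and c = (0, 0, n (z - xy))
   central.  Central elements are cheap: (0, 0, m n) = [a^m, b^n] has length
   2 (|m| + |n|), so writing |k| = q p + r gives |(0, 0, k)|_S <= 4 (|k|/p + p) for every
   p > 0.  Hence |c|_S / n -> 0, and |g^n|_S / n is squeezed to |x| + |y|. *)

From HB Require Import structures.
From mathcomp Require Import all_boot all_order all_algebra zify ring lra.
From mathcomp Require Import all_classical all_reals all_analysis.
Set Implicit Arguments. Unset Strict Implicit. Unset Printing Implicit Defensive.
Import Order.TTheory GRing.Theory Num.Theory numFieldNormedType.Exports.
Local Open Scope classical_set_scope.
Local Open Scope ring_scope.

Ltac heis_eq := rewrite /hmul /hone /hx /hy /hz /=; congr (_, _, _); ring.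

Lemma hmulA (g h k : heis) : hmul g (hmul h k) = hmul (hmul g h) k.
Proof. by case: g => [[? ?] ?]; case: h => [[? ?] ?]; case: k => [[? ?] ?]; heis_eq. Qed.

Lemma hmul1 (g : heis) : hmul g hone = g.
Proof. by case: g => [[? ?] ?]; heis_eq. Qed.

Lemma hpowE (x y z : int) (n : nat) :
  hpow (x, y, z) n = (n%:Z * x, n%:Z * y, n%:Z * z + x * y * 'C(n, 2)%:Z).
Proof.
elim: n => [|n IH]; first by rewrite /hpow /= !mul0r mulr0 addr0.
by rewrite /hpow iterS -/(hpow _ _) IH binS bin1 !PoszD intS; heis_eq.
Qed.

Lemma eval_word_rcons (w : seq 'I_4) (i : 'I_4) :
  eval_word (rcons w i) = hmul (eval_word w) (gen i).
Proof. by rewrite /eval_word foldl_rcons. Qed.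

Lemma eval_word_cat (w1 w2 : seq 'I_4) :
  eval_word (w1 ++ w2) = hmul (eval_word w1) (eval_word w2).
Proof.
elim/last_ind: w2 => [|w2 i IH]; first by rewrite cats0 hmul1.
by rewrite -rcons_cat !eval_word_rcons IH hmulA.
Qed.

Lemma word_length_le (g : heis) (w : seq 'I_4) :
  eval_word w = g -> (word_length g <= size w)%N.
Proof.
move=> wg; rewrite /word_length; case: ex_minnP => m _; apply.
by apply/existsP; exists (in_tuple w); rewrite wg.
Qed.

Lemma word_lengthP (g : heis) :
  exists2 w, eval_word w = g & size w = word_length g.
Proof.
rewrite /word_length; case: ex_minnP => m /existsP [t /eqP tg] _.
by exists t; rewrite ?size_tuple.
Qed.

Lemma norm_hxy_le_size (w : seq 'I_4) :
  (`|hx (eval_word w)| + `|hy (eval_word w)| <= size w)%N.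
Proof.
elim/last_ind: w => [|w i IH] //; rewrite eval_word_rcons size_rcons /hmul /hx /hy /=.
move: IH; rewrite /hx /hy; case: i => -[|[|[|[|?]]]] //= _; lia.
Qed.

Lemma word_length_ge (g : heis) : (`|hx g| + `|hy g| <= word_length g)%N.
Proof. by have [w <- <-] := word_lengthP g; exact: norm_hxy_le_size. Qed.

Lemma word_length_mul_le (g h : heis) (a b : nat) :
  (word_length g <= a)%N -> (word_length h <= b)%N ->
  (word_length (hmul g h) <= a + b)%N.
Proof.
have [wg <- <-] := word_lengthP g; have [wh <- <-] := word_lengthP h.
move=> /(leq_add) /[apply]; apply: leq_trans.
by rewrite -size_cat; apply: word_length_le; rewrite eval_word_cat.
Qed.

Lemma word_length_hpow (g : heis) (n : nat) :
  (word_length (hpow g n) <= n * word_length g)%N.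
Proof.
elim: n => [|n IH]; first by rewrite (@word_length_le _ [::]).
rewrite /hpow iterS -/(hpow _ _) mulSn.
exact: word_length_mul_le.
Qed.

Lemma word_length_gen (i : 'I_4) : (word_length (gen i) <= 1)%N.
Proof.
by apply: (@word_length_le _ [:: i]); rewrite /eval_word /=; case: (gen i) => [[? ?] ?]; heis_eq.
Qed.

Lemma word_length_hpow_gen (i : 'I_4) (n : nat) : (word_length (hpow (gen i) n) <= n)%N.
Proof.
apply: leq_trans (word_length_hpow _ _) _.
by rewrite -[leqRHS]muln1 leq_mul2l word_length_gen orbT.
Qed.

Lemma word_length_x (m : int) : (word_length (m, 0, 0)%R <= `|m|)%N.
Proof.
have [m_ge0|m_lt0] := leP 0 m.
- have -> : ((m, 0, 0) = hpow (gen o0) `|m| :> heis)%R by rewrite hpowE; congr (_, _, _); lia.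
  exact: word_length_hpow_gen.
- have -> : ((m, 0, 0) = hpow (gen o1) `|m| :> heis)%R by rewrite hpowE; congr (_, _, _); lia.
  exact: word_length_hpow_gen.
Qed.

Lemma word_length_y (m : int) : (word_length (0, m, 0)%R <= `|m|)%N.
Proof.
have [m_ge0|m_lt0] := leP 0 m.
- have -> : ((0, m, 0) = hpow (gen o2) `|m| :> heis)%R by rewrite hpowE; congr (_, _, _); lia.
  exact: word_length_hpow_gen.
- have -> : ((0, m, 0) = hpow (gen o3) `|m| :> heis)%R by rewrite hpowE; congr (_, _, _); lia.
  exact: word_length_hpow_gen.
Qed.

Lemma word_length_commutator (m n : int) :
  (word_length (0, 0, m * n)%R <= 2 * (`|m| + `|n|))%N.
Proof.
have -> : ((0, 0, m * n) = hmul (hmul (hmul (m, 0, 0) (0, n, 0)) (- m, 0, 0)) (0, - n, 0) :> heis)%R.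
  by heis_eq.
have -> : (2 * (`|m| + `|n|) = `|m| + `|n| + `|- m| + `|- n|)%N.
  by rewrite !abszN; lia.
apply: word_length_mul_le (word_length_y _).
apply: word_length_mul_le (word_length_x _).
exact: word_length_mul_le (word_length_x _) (word_length_y _).
Qed.

Lemma word_length_central (k : int) (p : nat) : (0 < p)%N ->
  (word_length (0, 0, k)%R <= 4 * (`|k| %/ p + p))%N.
Proof.
move=> p_gt0; set q := (`|k| %/ p)%N; set r := (`|k| %% p)%N.
have r_lt_p : (r < p)%N by rewrite ltn_mod.
have -> : ((0, 0, k) = hmul (0, 0, (sgz k * q) * p) (0, 0, (sgz k * r) * 1) :> heis)%R.
  rewrite /hmul /hx /hy /hz /=; congr (_, _, _); rewrite {1}[k]intEsg (divn_eq `|k| p).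
  ring.
have sg_le1 : (`|sgz k| <= 1)%N by case: sgzP.
apply: leq_trans (word_length_mul_le (word_length_commutator (sgz k * q) p)
                                     (word_length_commutator (sgz k * r) 1)) _.
rewrite !abszM /=; nia.
Qed.

Lemma word_length_xy (x y : int) : (word_length (x, y, x * y)%R <= `|x| + `|y|)%N.
Proof.
have -> : ((x, y, x * y) = hmul (x, 0, 0) (0, y, 0) :> heis)%R by heis_eq.
exact: word_length_mul_le (word_length_x _) (word_length_y _).
Qed.

Lemma hpow_central_split (x y z : int) (n : nat) :
  hpow (x, y, z) n = hmul (hpow (x, y, x * y) n) (0, 0, n%:Z * (z - x * y)).
Proof. by rewrite !hpowE; heis_eq. Qed.

Lemma word_length_hpow_ge (x y z : int) (n : nat) :
  (n * (`|x| + `|y|) <= word_length (hpow (x, y, z) n))%N.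
Proof.
apply: leq_trans (word_length_ge _); rewrite hpowE /hx /hy /= !abszM /=; lia.
Qed.

Lemma word_length_hpow_le (x y z : int) (n : nat) :
  (word_length (hpow (x, y, z) n)
     <= n * (`|x| + `|y|) + word_length (0, 0, n%:Z * (z - x * y))%R)%N.
Proof.
rewrite hpow_central_split; apply: word_length_mul_le => //.
exact: leq_trans (word_length_hpow _ _) (leq_mul (leqnn n) (word_length_xy x y)).
Qed.

Lemma cvg_ratio0_of_tradeoff_bound (R : realType) (u : nat -> R) (c : R) :
  (forall n, 0 <= u n) ->
  (forall p n : nat, (0 < p)%N -> u n <= c * (n%:R / p%:R + p%:R)) ->
  (fun n => u n / n%:R) @ \oo --> 0.
Proof.
move=> u_ge0 u_le; apply/cvgr0Pnorm_lt => e e_gt0.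
have c_ge0 : 0 <= c.
  by have := le_trans (u_ge0 0%N) (u_le 1%N 0%N isT); rewrite mul0r add0r mulr1.
set p := (Num.truncn (2 * c / e)).+1.
have p_gt0 : (0 : R) < p%:R by rewrite ltr0n.
have cp_lt : c / p%:R < e / 2.
  have := truncnS_gt (2 * c / e); rewrite -/p ltr_pdivrMr // => lt_p.
  rewrite ltr_pdivrMr //; lra.
near=> n.
have n_gt : 2 * c * p%:R / e < n%:R by near: n; exact: nbhs_infty_gtr.
have n_gt0 : (0 : R) < n%:R.
  by apply: le_lt_trans n_gt; rewrite !divr_ge0 ?mulr_ge0 ?ler0n // ltW.
have cn_lt : c * p%:R / n%:R < e / 2.
  move: n_gt; rewrite ltr_pdivrMr // => n_gt; rewrite ltr_pdivrMr //; lra.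
rewrite ger0_norm ?divr_ge0 ?ler0n //.
apply: le_lt_trans (_ : c / p%:R + c * p%:R / n%:R < e); last by lra.
rewrite ler_pdivrMr //; apply: le_trans (u_le p n _) _ => //.
by rewrite mulrDr mulrDl divfK ?lt0r_neq0 // mulrA mulrAC.
Unshelve. all: by end_near.
Qed.

Lemma word_length_central_sublinear (R : realType) (d : int) :
  (fun n : nat => (word_length (0, 0, n%:Z * d)%R)%:R / n%:R : R) @ \oo --> 0.
Proof.
apply: (@cvg_ratio0_of_tradeoff_bound _ _ (4 * (`|d| + 1)%:R)) => [n|p n p_gt0].
  exact: ler0n.
have p_gt0' : (0 : R) < p%:R by rewrite ltr0n.
have div_le : ((n * `|d|) %/ p)%:R <= `|d|%:R * (n%:R / p%:R) :> R.
  by rewrite mulrA ler_pdivlMr // -!natrM ler_nat [X in (_ <= X)%N]mulnC leq_divM.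
apply: le_trans (_ : 4 * (((n * `|d|) %/ p)%:R + p%:R) <= _).
  rewrite -[4]/(4%:R) -natrD -natrM ler_nat.
  by have := word_length_central (n%:Z * d) p_gt0; rewrite abszM.
have : 0 <= n%:R / p%:R :> R by rewrite divr_ge0 ?ler0n.
have : 0 <= `|d|%:R :> R by rewrite ler0n.
rewrite natrD; nra.
Qed.

Theorem corollary23 (R : realType) (x y z : int) :
  (fun n : nat => ((word_length (hpow (x, y, z) n))%:R / n%:R : R))
    @ \oo --> ((`|x| + `|y|)%:~R : R).
Proof.
rewrite -!abszE -PoszD; set L := (`|x| + `|y|)%N.
rewrite -[L%:~R]/(L%:R : R).
apply: (@squeeze_cvgr _ _ _ _ (cst L%:R)
  (fun n => L%:R + (word_length (0, 0, n%:Z * (z - x * y))%R)%:R / n%:R)).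
- near=> n.
  have n_gt0 : (0 : R) < n%:R by near: n; exact: nbhs_infty_gtr.
  rewrite /= ler_pdivlMr // ler_pdivrMr // mulrDl divfK ?lt0r_neq0 //.
  rewrite -!natrM -natrD !ler_nat mulnC word_length_hpow_ge.
  by rewrite /=; exact: word_length_hpow_le.
- by apply: cvg_cst.
- rewrite -[X in _ --> X]addr0; apply: cvgD; first exact: cvg_cst.
  exact: word_length_central_sublinear.
Unshelve. all: by end_near.
Qed.
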